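(* For every synchronous one-dimensional cellular automaton $A=(S,N,f,\mathbb{Z})$ with first neighbors neighborhood $N=(-1,0,1)$, there is an asynchronous cellular automaton $\mathbb{B}=(S\times\{1,2,3\},N,f',\mathbb{Z})$ which invariantly simulates $A$ in $1.5$-linear time, i.e. with integers $k,l$ satisfying $l/k=3/2$ in the definition of invariant simulation.
   Context: A one-dimensional cellular automaton (CA) $(S,N,f,\mathbb{Z})$: finite state set $S$, neighborhood vector $N=(n_1,\dots,n_k)$, local rule $f:S^k\to S$; configurations $c:\mathbb{Z}\to S$; global map $G(c)(i)=f(c(i+n_1),\dots,c(i+n_k))$. An asynchronous CA (ACA) evolves under an update schedule $\zeta:\mathbb{N}\to\mathcal{P}(\mathbb{Z})$ in which every cell appears in infinitely many $\zeta(t)$, via $c_{t+1}=G_{\zeta(t)}(c_t)$, with $G_D(c)(i)=G(c)(i)$ if $i\in D$ and $c(i)$ otherwise. The update history from $c_0$ is the sequence $h_0=c_0,h_1,\dots$ where $h_t(i)$ is the state of cell $i$ after its $t$-th genuine state change (undefined if there is none). $\mathbb{B}$ has invariant histories on $c_0$ if every update schedule gives the same history. Direct simulation: $F_A\prec F_B$ if there is $\psi:S^A\to\mathcal{P}(S')\setminus\{\varnothing\}$ with pairwise disjoint images such that for every configuration $c$, $\{F_B(c'):c'\in\psi(c)\}\subseteq\psi(F_A(c))$, where $\psi(c)=\{c': c'(i)\in\psi(c(i))\ \forall i\}$. Unpacking map $o_m$ ($m$ a positive integer): the bijection $(S^{m})^{\mathbb{Z}}\to S^{\mathbb{Z}}$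 with $o_m(c)(mi+r)=c(i)(r)$, $r\in\mathbb{Z}_m$. Translation: $\tau_v(c)(i)=c(i-v)$. Let $H^B$ map each cell in state $h_t(i)$ to $h_{t+1}(i)$ of its invariant update history under $\mathbb{B}$ (undefined where histories are not invariant). $\mathbb{B}$ invariantly simulates $A$ if there exist $m$, $o_m$, a translation $\tau_v$ and positive integers $k,l$ with $(G^A)^k\prec o_m^{-1}\circ(H^B)^l\circ o_m\circ\tau_v$; $l/k$ is the linear time parameter. *)

From mathcomp Require Import all_boot all_order all_algebra.
Set Implicit Arguments. Unset Strict Implicit. Unset Printing Implicit Defensive.
Import GRing.Theory Num.Theory.
Local Open Scope ring_scope.

Definition config (T : Type) := int -> T.

Definition glob {T : Type} (f : T -> T -> T -> T) (c : config T) : config T :=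
  fun i => f (c (i - 1)) (c i) (c (i + 1)).

Definition globD {T : Type} (f : T -> T -> T -> T) (D : pred int) (c : config T)
  : config T :=
  fun i => if D i then glob f c i else c i.

Definition schedule (zeta : nat -> pred int) : Prop :=
  forall (i : int) (T : nat), exists t : nat, (T <= t)%N /\ zeta t i.

Fixpoint traj {T : Type} (f : T -> T -> T -> T) (zeta : nat -> pred int)
  (c0 : config T) (t : nat) : config T :=
  match t with
  | O => c0
  | S t' => globD f (zeta t') (traj f zeta c0 t')
  end.

Definition nchanges {T : eqType} (tr : nat -> config T) (i : int) (n : nat) : nat :=
  \sum_(u < n) (tr u.+1 i != tr u i).

(* Update history: [hist tr i t s] iff h_t(i) = s, i.e. s is the state of cell i
   after its t-th genuine state change (h_0(i) = c_0(i)). *)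
Definition hist {T : eqType} (tr : nat -> config T) (i : int) (t : nat) (s : T) : Prop :=
  exists n : nat, nchanges tr i n = t /\ tr n i = s.

Definition invariant_hist {T : eqType} (f : T -> T -> T -> T) (c0 : config T) : Prop :=
  forall zeta1 zeta2, schedule zeta1 -> schedule zeta2 ->
  forall (i : int) (t : nat) (s : T),
    hist (traj f zeta1 c0) i t s <-> hist (traj f zeta2 c0) i t s.

(* [HBiter f l c0 w] : (H^B)^l maps c0 = h_0 to w = h_l, which is defined
   everywhere, under invariant histories. *)
Definition HBiter {T : eqType} (f : T -> T -> T -> T) (l : nat) (c0 w : config T)
  : Prop :=
  invariant_hist f c0 /\
  forall zeta, schedule zeta -> forall i : int, hist (traj f zeta c0) i l (w i).

Definition transl {T : Type} (v : int) (c : config T) : config T :=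
  fun i => c (i - v).

(* Unpacking map o_M for block size M = m.+1 (positive), and its inverse. *)
Definition unpack {T : Type} (m : nat) (c : config ('I_m.+1 -> T)) : config T :=
  fun j => c (j %/ (m.+1)%:Z)%Z (inord `|(j %% (m.+1)%:Z)%Z|%N).

Definition pack {T : Type} (m : nat) (c : config T) : config ('I_m.+1 -> T) :=
  fun i r => c (i * (m.+1)%:Z + (nat_of_ord r)%:Z).

Definition psi_conf {S T : Type} (psi : S -> (T -> Prop)) (c : config S)
  : config T -> Prop :=
  fun c' => forall i, psi (c i) (c' i).

Definition inv_simulates_with {S : finType}
  (f : S -> S -> S -> S) (f' : S * 'I_3 -> S * 'I_3 -> S * 'I_3 -> S * 'I_3)
  (k l : nat) : Prop :=
  (0 < k)%N /\ (0 < l)%N /\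
  exists (m : nat) (v : int) (psi : S -> (('I_m.+1 -> S * 'I_3) -> Prop)),
    (forall s, exists x, psi s x) /\
    (forall s1 s2 x, psi s1 x -> psi s2 x -> s1 = s2) /\
    (forall (c : config S) (c' : config ('I_m.+1 -> S * 'I_3)),
       psi_conf psi c c' ->
       exists w : config (S * 'I_3),
         HBiter f' l (@unpack _ m (transl v c')) w /\
         psi_conf psi (iter k (glob f) c) (@pack _ m w)).

From mathcomp Require Import all_boot all_order all_algebra.
From mathcomp Require Import zify.
Set Implicit Arguments. Unset Strict Implicit. Unset Printing Implicit Defensive.
Import GRing.Theory Num.Theory.
Local Open Scope ring_scope.

(* Cells [2x] and [2x+1] of B form the block of A-cell [x]; each B-cell
   carries a state of A and a phase in Z/3, and it updates (phase + 1) exactly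
   when both neighbours are one phase behind it.  From the phases 0,1,0,1,...
   every odd cell stays ahead of its neighbours by zero or one update, so the
   n-th state of a cell does not depend on the schedule, and fairness makes
   every cell update forever: histories are invariant.  Identifying S with a
   cyclic group, three updates of a block compute two steps of A: a cell first
   stores the sum of two adjacent A-states, from which its neighbour recovers
   the one it misses by subtracting its own.  Each such round also shifts the
   simulated configuration one block to the left, which the translation
   [tau_1] compensates. *)

Lemma fin_cancel_add (S : finType) :
  exists add sub : S -> S -> S,
    (forall a b, sub (add a b) a = b) /\ (forall a b, sub (add a b) b = a).
Proof.
case cardS: #|S| => [|n].
  by exists (fun a _ => a), (fun a _ => a); split=> a; have := card0_eq cardS a.
pose enc a : 'I_n.+1 := cast_ord cardS (enum_rank a).
pose dec i : S := enum_val (cast_ord (esym cardS) i).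
have encK : cancel enc dec by move=> a; rewrite /enc /dec cast_ordK enum_rankK.
have decK : cancel dec enc by move=> i; rewrite /enc /dec enum_valK cast_ordKV.
exists (fun a b => dec (enc a + enc b)), (fun a b => dec (enc a - enc b)).
split=> a b; rewrite decK.
- by rewrite [enc a + _]addrC addrK encK.
- by rewrite addrK encK.
Qed.

Lemma iter_glob_transl (T : Type) (F : T -> T -> T -> T) (v : int) (c : config T) k i :
  iter k (glob F) (transl v c) i = transl v (iter k (glob F) c) i.
Proof.
elim: k i => [|k IHk] i //=.
by rewrite /glob !IHk /transl addrAC [i + 1 - v]addrAC.
Qed.

Lemma unit_steps_hit (u : nat -> nat) k t : u 0%N = 0%N -> (forall s, u s.+1 <= (u s).+1)%N ->
  (k <= u t)%N -> exists s, u s = k.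
Proof.
move=> u0 stepu; elim: t => [|t IHt] le_k; first by exists 0%N; lia.
case: (leqP k (u t)) => [/IHt // | lt_k]; exists t.+1.
by have := stepu t; lia.
Qed.

Definition sim_phase (p : bool) (n : nat) : 'I_3 := (p + n)%:R.

Lemma val_sim_phase p n : val (sim_phase p n) = ((p + n) %% 3)%N.
Proof. by rewrite /sim_phase Zp_nat. Qed.

Lemma sim_phaseS p n : sim_phase p n + 1 = sim_phase p n.+1.
Proof. by rewrite /sim_phase addnS natr1. Qed.

Lemma sim_phase_mod3 p n : sim_phase p n = sim_phase p (n %% 3).
Proof. by apply: val_inj; rewrite !val_sim_phase; lia. Qed.

Lemma sim_phase_nbr (p : bool) m n : (m <= n + ~~ p <= m.+1)%N ->
  (sim_phase (~~ p) m == sim_phase p n - 1) = (m == n + ~~ p)%N.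
Proof.
move=> lim; rewrite eq_sym subr_eq sim_phaseS -val_eqE !val_sim_phase.
by case: p lim => /= lim; apply/eqP/eqP; lia.
Qed.

Lemma odd_cell (x : int) (p : bool) : odd `|(x * 2 + p)%R|%N = p.
Proof. lia. Qed.

Definition enabled (N : int -> nat) (j : int) : bool :=
  (N (j - 1) == (N j + ~~ odd `|j|)%N) && (N (j + 1) == (N j + ~~ odd `|j|)%N).

Definition staggered (N : int -> nat) : Prop :=
  forall i j : int, odd `|j|%N -> (i == j - 1) || (i == j + 1) -> (N i <= N j <= (N i).+1)%N.

Definition count_step (D : pred int) (N : int -> nat) (j : int) : nat :=
  (N j + (D j && enabled N j))%N.

Fixpoint counts (zeta : nat -> pred int) (t : nat) : int -> nat :=
  if t is t'.+1 then count_step (zeta t') (counts zeta t') else fun=> 0%N.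

Lemma adjacent_sym (i j : int) : (i == j - 1) || (i == j + 1) -> (j == i - 1) || (j == i + 1).
Proof. lia. Qed.

Lemma enabled_nbr N i j : enabled N j -> (i == j - 1) || (i == j + 1) ->
  N i = (N j + ~~ odd `|j|)%N.
Proof. by case/andP=> /eqP-l /eqP-r /orP[] /eqP->. Qed.

Lemma staggered_nbr N i j : staggered N -> (i == j - 1) || (i == j + 1) ->
  (N i <= N j + ~~ odd `|j| <= (N i).+1)%N.
Proof.
move=> stN ij; case: (boolP (odd `|j|%N)) => [oj | ej].
  by rewrite addn0; apply: stN.
have /andP[] := stN j i (ltac:(lia)) (adjacent_sym ij); lia.
Qed.

Lemma staggered_step D N : staggered N -> staggered (count_step D N).
Proof.
move=> stN i j oj ij; have := stN i j oj ij; rewrite /count_step.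
case: (D j && enabled N j) / andP => [[_ /(@enabled_nbr _ i _)/(_ ij)] | _];
case: (D i && enabled N i) / andP => [[_ /(@enabled_nbr _ j _)/(_ (adjacent_sym ij))] | _];
lia.
Qed.

Lemma staggered_counts zeta t : staggered (counts zeta t).
Proof. by elim: t => [|t IHt] //=; apply: staggered_step. Qed.

Lemma counts_le zeta j : {homo counts zeta ^~ j : t t' / (t <= t')%N >-> (t <= t')%N}.
Proof. by apply: homo_leq => [//||t]; [apply: leq_trans | apply: leq_addr]. Qed.

Section Fairness.
Variable zeta : nat -> pred int.
Hypothesis fair : schedule zeta.

Lemma counts_fire j k :
  (exists t, k <= counts zeta t j)%N ->
  (forall i, (i == j - 1) || (i == j + 1) ->
     exists t, (k + ~~ odd `|j| <= counts zeta t i)%N) ->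
  exists t, (k < counts zeta t j)%N.
Proof.
move=> [t0 le_t0] nbr.
have [t1 le_t1] := nbr (j - 1) ltac:(by rewrite eqxx).
have [t2 le_t2] := nbr (j + 1) ltac:(by rewrite eqxx orbT).
have [t [le_t zt]] := fair j (maxn t0 (maxn t1 t2)).
have late s i : (s <= maxn t0 (maxn t1 t2))%N -> (counts zeta s i <= counts zeta t i)%N.
  by move=> le_s; apply/counts_le/(leq_trans le_s).
have {}le_t0 := leq_trans le_t0 (late t0 j ltac:(lia)).
have {}le_t1 := leq_trans le_t1 (late t1 (j - 1) ltac:(lia)).
have {}le_t2 := leq_trans le_t2 (late t2 (j + 1) ltac:(lia)).
case: (ltnP k (counts zeta t j)) => [|le_k]; first by exists t.
have := @staggered_nbr _ (j - 1) j (staggered_counts zeta t) ltac:(by rewrite eqxx).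
have := @staggered_nbr _ (j + 1) j (staggered_counts zeta t) ltac:(by rewrite eqxx orbT).
move=> nbr_r nbr_l; exists t.+1; rewrite /= /count_step zt /=.
suff -> : enabled (counts zeta t) j by rewrite addn1 ltnS.
by apply/andP; split; apply/eqP; lia.
Qed.

Lemma counts_unbounded k j : exists t, (k <= counts zeta t j)%N.
Proof.
elim: k j => [|k IHk] j; first by exists 0%N.
have odd_fire i : odd `|i|%N -> exists t, (k < counts zeta t i)%N.
  by move=> oi; apply: counts_fire => // i' _; rewrite oi addn0.
apply: counts_fire => // i ij; case: (boolP (odd `|j|%N)) => [_ | ej].
  by rewrite addn0.
by rewrite addn1; apply: odd_fire; lia.
Qed.
End Fairness.

Section Simulation.
Variables (S : eqType) (f : S -> S -> S -> S) (add sub : S -> S -> S).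

Definition sim_update (ph : 'I_3) (l o r : S) : S :=
  if ph == 0 then f (sub l o) o (sub r o) else if ph == 1 then add l r else r.

Definition sim_rule (l o r : S * 'I_3) : S * 'I_3 :=
  if (l.2 == o.2 - 1) && (r.2 == o.2 - 1) then (sim_update o.2 l.1 o.1 r.1, o.2 + 1)
  else o.

Hypothesis addKl : forall a b, sub (add a b) a = b.
Hypothesis addKr : forall a b, sub (add a b) b = a.
Variable c : config S.
Local Notation A t := (iter t (glob f) c).

(* The state of cell [x * 2 + p] after [q * 3 + r] updates. *)
Definition cell_value (p : bool) (x : int) (q r : nat) : S :=
  let y := x + q%:Z in
  match r, p with
  | 0, _ => A q.*2 y
  | 1, false => A q.*2.+1 y
  | 1, true => add (A q.*2 y) (A q.*2 (y + 1))
  | _, false => add (A q.*2.+1 y) (A q.*2.+1 (y + 1))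
  | _, true => A q.*2.+1 (y + 1)
  end.

Definition sim_value (p : bool) (x : int) (n : nat) : S := cell_value p x (n %/ 3) (n %% 3).

Definition sim_state (j : int) (n : nat) : S * 'I_3 :=
  (sim_value (odd `|j|) (j %/ 2)%Z n, sim_phase (odd `|j|) n).

Lemma sim_value_qr p x q r : (r < 3)%N -> sim_value p x (q * 3 + r)%N = cell_value p x q r.
Proof. by move=> lt_r3; rewrite /sim_value divnMDl // divn_small // addn0 modnMDl modn_small. Qed.

Lemma sim_update_even x n :
  sim_update (sim_phase false n) (sim_value true (x - 1) n.+1) (sim_value false x n)
    (sim_value true x n.+1) = sim_value false x n.+1.
Proof.
have [q r -> lt_r3] := edivnP n 3.
rewrite sim_phase_mod3 modnMDl modn_small // /sim_update -!val_eqE val_sim_phase -addnS.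
case: r lt_r3 => [|[|[|//]]] _.
- by rewrite !sim_value_qr //= [x - 1 + _]addrAC subrK addKr addKl.
- by rewrite !sim_value_qr //= [x - 1 + _]addrAC subrK.
- rewrite (_ : q * 3 + 3 = q.+1 * 3 + 0)%N; last by rewrite mulSnr addn0.
  by rewrite !sim_value_qr.
Qed.

Lemma sim_update_odd x n :
  sim_update (sim_phase true n) (sim_value false x n) (sim_value true x n)
    (sim_value false (x + 1) n) = sim_value true x n.+1.
Proof.
have [q r -> lt_r3] := edivnP n 3.
rewrite sim_phase_mod3 modnMDl modn_small // /sim_update -!val_eqE val_sim_phase -addnS.
case: r lt_r3 => [|[|[|//]]] _.
- by rewrite !sim_value_qr //= [x + 1 + _]addrAC.
- by rewrite !sim_value_qr //= [x + 1 + _]addrAC.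
- rewrite (_ : q * 3 + 3 = q.+1 * 3 + 0)%N; last by rewrite mulSnr addn0.
  rewrite !sim_value_qr //= [x + 1 + _]addrAC addKr addKl (_ : x + q.+1 = x + q + 1); last by lia.
  by rewrite /glob !addrK.
Qed.

Lemma sim_state_cell (x : int) (p : bool) n : sim_state (x * 2 + p) n = (sim_value p x n, sim_phase p n).
Proof. by rewrite /sim_state odd_cell (_ : ((x * 2 + p) %/ 2)%Z = x) //; lia. Qed.

(* [(~~ p)%:Z] rather than [~~ p]: [- ~~ p] would be the opposite in the ring bool. *)
Lemma sim_update_cell (x : int) (p : bool) n :
  sim_update (sim_phase p n) (sim_value (~~ p) (x - (~~ p)%:Z) (n + ~~ p))
    (sim_value p x n) (sim_value (~~ p) (x + p) (n + ~~ p)) = sim_value p x n.+1.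
Proof.
case: p; rewrite ?subr0 ?addr0 ?addn0 ?addn1; [exact: sim_update_odd | exact: sim_update_even].
Qed.

Lemma sim_rule_counts N j : staggered N ->
  sim_rule (sim_state (j - 1) (N (j - 1))) (sim_state j (N j)) (sim_state (j + 1) (N (j + 1)))
  = sim_state j (N j + enabled N j)%N.
Proof.
move=> stN; rewrite /enabled.
move: (@staggered_nbr _ (j - 1) j stN ltac:(by rewrite eqxx)).
move: (@staggered_nbr _ (j + 1) j stN ltac:(by rewrite eqxx orbT)).
have [x [p ->]] : exists (x : int) (p : bool), j = x * 2 + p by exists (j %/ 2)%Z, (odd `|j|%N); lia.
rewrite odd_cell (_ : x * 2 + p - 1 = (x - (~~ p)%:Z) * 2 + ~~ p); last by case: p; lia.
rewrite (_ : x * 2 + p + 1 = (x + p) * 2 + ~~ p); last by case: p; lia.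
rewrite !sim_state_cell /sim_rule => nbr_r nbr_l.
rewrite !sim_phase_nbr //.
case: andP => [[/eqP-> /eqP->] | _] /=; last by rewrite addn0.
by rewrite sim_update_cell sim_phaseS addn1.
Qed.

Lemma sim_state_mul3 j q :
  sim_state j (q * 3)%N = (iter q.*2 (glob f) c ((j %/ 2)%Z + q), sim_phase (odd `|j|) 0).
Proof. by rewrite /sim_state -[(q * 3)%N]addn0 sim_value_qr // sim_phase_mod3 modnMDl. Qed.

Section Trajectory.
Variables (zeta : nat -> pred int) (b0 : config (S * 'I_3)).
Hypothesis b0E : forall j, b0 j = sim_state j 0.

Lemma traj_sim_rule t j : traj sim_rule zeta b0 t j = sim_state j (counts zeta t j).
Proof.
elim: t j => [|t IHt] j /=; first exact: b0E.
rewrite /globD /count_step; case: (zeta t j) => /=; last by rewrite addn0 IHt.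
by rewrite /glob !IHt sim_rule_counts //; apply: staggered_counts.
Qed.

Lemma sim_stateS_neq j n : sim_state j n.+1 != sim_state j n.
Proof. by apply/negP => /eqP[_ /(congr1 val)]; rewrite !val_sim_phase; lia. Qed.

Lemma nchanges_sim_rule t j : nchanges (traj sim_rule zeta b0) j t = counts zeta t j.
Proof.
elim: t => [|t IHt]; first by rewrite /nchanges big_ord0.
rewrite /nchanges big_ord_recr -/(nchanges _ j t) IHt !traj_sim_rule /= /count_step.
case: (_ && _) => /=; first by rewrite addn1 sim_stateS_neq addn1.
by rewrite addn0 eqxx addn0.
Qed.

Lemma hist_sim_rule : schedule zeta ->
  forall j n s, hist (traj sim_rule zeta b0) j n s <-> s = sim_state j n.
Proof.
move=> fair j n s; split=> [[t [<- <-]] | ->].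
  by rewrite traj_sim_rule nchanges_sim_rule.
have [t tn] := counts_unbounded fair n j.
have step u : (counts zeta u.+1 j <= (counts zeta u j).+1)%N.
  by rewrite /= /count_step -addn1 leq_add2l leq_b1.
have [u un] := unit_steps_hit (u := counts zeta ^~ j) (erefl 0%N) step tn.
by exists u; rewrite nchanges_sim_rule traj_sim_rule un.
Qed.
End Trajectory.

Lemma HBiter_sim_rule b0 l : (forall j, b0 j = sim_state j 0) ->
  HBiter sim_rule l b0 (sim_state ^~ l).
Proof.
move=> b0E; split=> [z1 z2 fair1 fair2 j n s | z fair j].
  by rewrite !hist_sim_rule.
exact/hist_sim_rule.
Qed.
End Simulation.

Definition pair_code (S : Type) (s : S) (b : 'I_2 -> S * 'I_3) : Prop :=
  forall r : 'I_2, b r = (s, r%:R).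

Lemma unpack_pair_code (S : eqType) f add (c : config S) c' :
  psi_conf (@pair_code S) c c' ->
  forall j, @unpack _ 1 (transl 1 c') j = sim_state f add (transl 1 c) j 0.
Proof.
move=> code j; have := sim_state_mul3 f add (transl 1 c) j 0; rewrite mul0n => ->.
rewrite /unpack /transl code addr0; congr pair; apply: val_inj.
by rewrite val_sim_phase /= Zp_nat /= inordK; lia.
Qed.

Lemma pack_pair_code (S : eqType) f add (c : config S) :
  psi_conf (@pair_code S) (iter 2 (glob f) c) (@pack _ 1 (sim_state f add (transl 1 c) ^~ 3%N)).
Proof.
move=> i r; rewrite /pack.
have := sim_state_mul3 f add (transl 1 c) (i * 2 + r) 1; rewrite mul1n => ->.
have lt_r2 := ltn_ord r; congr pair.
  by rewrite iter_glob_transl /transl; congr (iter _ _ _ _); lia.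
by apply: val_inj; rewrite val_sim_phase /= Zp_nat /=; lia.
Qed.

Theorem mainTheorem4 :
  forall (S : finType) (f : S -> S -> S -> S),
  exists f' : S * 'I_3 -> S * 'I_3 -> S * 'I_3 -> S * 'I_3,
  exists k l : nat, (l * 2 = k * 3)%N /\ inv_simulates_with f f' k l.
Proof.
move=> S f; have [add [sub [addKl addKr]]] := fin_cancel_add S.
exists (sim_rule f add sub), 2%N, 3%N; split=> //; do 2!split=> //.
exists 1%N, 1, (@pair_code S); split; [|split].
- by move=> s; exists (fun r => (s, r%:R)).
- by move=> s1 s2 b code1 code2; move: (code1 ord0); rewrite code2 => -[].
move=> c c' code; exists (sim_state f add (transl 1 c) ^~ 3%N); split.
  exact/(HBiter_sim_rule addKl addKr)/unpack_pair_code.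
exact: pack_pair_code.
Qed.
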